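(* Let $n,m$ be positive integers, let $A_1,\dots,A_m\in\mathbb{S}_n$, and let $\mathcal{A}:\mathbb{S}_n\to\mathbb{R}^m$, $\mathcal{A}(X)=(\langle A_i,X\rangle)_{i=1}^m$, with adjoint $\mathcal{A}^*(y)=\sum_{i=1}^m y_iA_i$. Assume $\mathcal{A}\mathcal{A}^*$ is invertible. Let $b\in\mathbb{R}^m$, $C\in\mathbb{S}_n$, and $D:=\mathcal{A}^*\big((\mathcal{A}\mathcal{A}^* )^{-1}b\big)$. Assume that the problem $$\inf_{y\in\mathbb{R}^m} b^{\intercal}y\quad\text{s.t.}\quad S=\mathcal{A}^*(y)-C\succeq 0,\ \operatorname{diag}(S)=\mathbf{1}\qquad(\mathrm{DSDP})$$ admits a KKT point (defined in the context). Let $0<\sigma_{\min}<\sigma_{\max}$ and let $\{\varepsilon_k\}_{k\in\mathbb{N}},\{\tau_k\}_{k\in\mathbb{N}}\subseteq(0,\infty)$ satisfy $\sum_{k=0}^\infty\varepsilon_k<\infty$ and $\sum_{k=0}^\infty\tau_k<\infty$. Consider sequences generated as follows: $y^0=0$, $\widetilde{X}^0=0$, and for $k=0,1,2,\dots$: choose $\sigma_k\in[\sigma_{\min},\sigma_{\max}]$, a positive integer $p_{k+1}$ and a matrix $Y^{k+1}\in\mathbb{R}^{n\times p_{k+1}}$ all of whose rows have Euclidean norm $1$; set $S^{k+1}=Y^{k+1}(Y^{k+1})^{\intercal}$, $y^{k+1}=(\mathcal{A}\mathcal{A}^* )^{-1}\mathcal{A}(S^{k+1}+C)$, $\widetilde{X}^{k+1}=\widetilde{X}^k-\sigma_k\big(\mathcal{A}^*(y^{k+1})-S^{k+1}-C\big)$,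 $z^{k+1}=\operatorname{diag}\big((\widetilde{X}^{k+1}+D)S^{k+1}\big)$, $X^{k+1}=\widetilde{X}^{k+1}+D-\operatorname{Diag}(z^{k+1})$; and suppose $Y^{k+1}$ satisfies the stopping criterion $$\|X^{k+1}Y^{k+1}\|\le\varepsilon_k\quad\text{and}\quad\lambda_{\min}(X^{k+1})\ge-\tau_k .$$ Let $(\hat S,\hat y,\hat X,\hat z)$ be a limit point of $\{(S^k,y^k,X^k,z^k)\}_{k\ge1}$. Then $(\hat S,\hat y,\hat X,\hat z)$ is a KKT point of (DSDP).
   Context: $\mathbb{S}_n$ is the space of real symmetric $n\times n$ matrices, $\mathbb{S}_n^+$ its PSD cone; $\langle A,B\rangle=\mathrm{Tr}(A^{\intercal}B)$ and $\|\cdot\|$ is the Frobenius norm. For a square matrix $M$, $\operatorname{diag}(M)$ is the vector of its diagonal entries; for a vector $z$, $\operatorname{Diag}(z)$ is the diagonal matrix with diagonal $z$; $\mathbf{1}$ is the all-ones vector; $\lambda_{\min}$ denotes the smallest eigenvalue. A KKT point of (DSDP) is a tuple $(S,y,X,z)\in\mathbb{S}_n\times\mathbb{R}^m\times\mathbb{S}_n\times\mathbb{R}^n$ with $S=\mathcal{A}^*(y)-C$, $S\succeq0$, $\operatorname{diag}(S)=\mathbf{1}$, $X\succeq0$, $\langle X,S\rangle=0$, and $\mathcal{A}(X+\operatorname{Diag}(z))=b$. In the paper's algorithm, $Y^{k+1}$ is obtained by approximately minimizing $Y\mapsto L_{\sigma_k}(YY^{\intercal},y^k,\widetilde{X}^k)$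 over matrices with unit-norm rows, where $L_\sigma(S,y,\widetilde{X})=\langle D,S+C\rangle-\langle\widetilde{X},\mathcal{A}^*(y)-S-C\rangle+\frac{\sigma}{2}\|\mathcal{A}^*(y)-S-C\|^2$; the result only uses the stopping criterion stated. *)

From HB Require Import structures.
From mathcomp Require Import all_boot all_order all_algebra.
From mathcomp Require Import all_classical all_reals all_analysis.
Set Implicit Arguments. Unset Strict Implicit. Unset Printing Implicit Defensive.
Import Order.TTheory GRing.Theory Num.Theory.
Import numFieldNormedType.Exports.
Local Open Scope ring_scope.

Section Defs.
Variable R : realType.

Definition mxinner (p q : nat) (A B : 'M[R]_(p, q)) : R := \tr (A^T *m B).

Definition frob (p q : nat) (M : 'M[R]_(p, q)) : R :=
  Num.sqrt (\sum_(i < p) \sum_(j < q) M i j ^+ 2).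

Definition symmx (n : nat) (M : 'M[R]_n) : Prop := M^T = M.

Definition psd (n : nat) (M : 'M[R]_n) : Prop :=
  symmx M /\ forall v : 'cV[R]_n, 0 <= (v^T *m M *m v) 0 0.

Definition mdiag (n : nat) (M : 'M[R]_n) : 'cV[R]_n := \col_i M i i.
Definition Diag (n : nat) (z : 'cV[R]_n) : 'M[R]_n := diag_mx z^T.

Definition Aop (n m : nat) (A : 'I_m -> 'M[R]_n) (X : 'M[R]_n) : 'cV[R]_m :=
  \col_i mxinner (A i) X.
Definition Aadj (n m : nat) (A : 'I_m -> 'M[R]_n) (y : 'cV[R]_m) : 'M[R]_n :=
  \sum_(i < m) y i 0 *: A i.

Definition AAt (n m : nat) (A : 'I_m -> 'M[R]_n) : 'M[R]_m :=
  \matrix_(i, j) mxinner (A i) (A j).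

Definition kkt (n m : nat) (A : 'I_m -> 'M[R]_n) (b : 'cV[R]_m) (C : 'M[R]_n)
  (S : 'M[R]_n) (y : 'cV[R]_m) (X : 'M[R]_n) (z : 'cV[R]_n) : Prop :=
  S = Aadj A y - C /\ psd S /\ mdiag S = const_mx 1 /\ psd X /\
  mxinner X S = 0 /\ Aop A (X + Diag z) = b.

End Defs.

(* Since y^{k+1} is the least-squares multiplier, the update of Xt^k moves along a
   direction in ker A, so Xt^k stays in ker A and X^{k+1} + Diag z^{k+1} is feasible for
   A(.) = b at every step; S^{k+1} = Y Y^T is psd with unit diagonal, and Cauchy-Schwarz
   gives |<X^{k+1}, S^{k+1}>| <= eps_k sqrt n.  Compare Xt^k with the KKT point through
   V_k := Xt^k - (X^0 + Diag z^0 - D).  The eigenvalue bounds on X^{k+1} and X^0 show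
   <r_k, V_{k+1}> <= eps_k sqrt n + tau_k n for the residual
   r_k := S^{k+1} + C - A^*(y^{k+1}), and V_k = V_{k+1} - sigma_k r_k turns this into the
   quasi-Fejer inequality
     sigma_min^2 |r_k|^2 <= |V_k|^2 - |V_{k+1}|^2 + 2 sigma_max (eps_k sqrt n + tau_k n).
   Summability of eps and tau forces r_k -> 0, and every KKT condition survives the
   passage to the limit along the subsequence. *)

From HB Require Import structures.
From mathcomp Require Import all_boot all_order all_algebra.
From mathcomp Require Import all_classical all_reals all_analysis.
From mathcomp Require Import spectral sesquilinear complex.
From mathcomp Require Import ring lra.
Import Order.TTheory GRing.Theory Num.Theory.
Import numFieldNormedType.Exports.
Local Open Scope classical_set_scope.
Local Open Scope ring_scope.
Set Implicit Arguments.
Unset Strict Implicit.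
Unset Printing Implicit Defensive.

Section HermitianSpectral.
Local Open Scope sesquilinear_scope.
Variable K : numClosedFieldType.

Lemma eigenvalue_spectral_diag n (M : 'M[K]_n) i :
  M \is normalmx -> eigenvalue M (spectral_diag M 0 i).
Proof.
move=> Mnormal; set P := spectralmx M.
have PM : P *m M = diag_mx (spectral_diag M) *m P.
  have Pu := spectral_unitarymx M.
  rewrite {1}(orthomx_spectralP Mnormal) invmx_unitary // !mulmxA.
  by rewrite (unitarymxP Pu) mul1mx.
apply/eigenvalueP; exists (row i P).
  by rewrite -row_mul PM; apply/rowP => j; rewrite mul_diag_mx !mxE.
apply/eqP => /(congr1 (fun v => v *m P ^t*)) /rowP /(_ i).
rewrite mul0mx -row_mul (unitarymxP (spectral_unitarymx M)) !mxE eqxx.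
by move=> /eqP; rewrite oner_eq0.
Qed.

Lemma ler_mxtrace_mul_hermitian n (M B : 'M[K]_n) (c : K) :
  M \is hermsymmx ->
  (forall a, eigenvalue M a -> a \is Num.real -> c <= a) ->
  (forall u : 'rV[K]_n, 0 <= (u *m B *m u ^t*) 0 0) ->
  c * \tr B <= \tr (M *m B).
Proof.
(* With M = P^* diag(d) P, tr (M B) = sum_i d_i Q_ii where Q := P B P^* has Q_ii >= 0. *)
move=> Mherm Meig Bpsd; set P := spectralmx M; set d := spectral_diag M.
have Pu : P \is unitarymx := spectral_unitarymx M.
have ME : M = P ^t* *m diag_mx d *m P.
  by rewrite -invmx_unitary //; apply/orthomx_spectralP/hermitian_normalmx.
set Q := P *m B *m P ^t*.
have trQ : \tr Q = \tr B.
  by rewrite mxtrace_mulC mulmxA -invmx_unitary // mulVmx ?spectral_unit ?mul1mx.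
have QE : \tr (M *m B) = \tr (diag_mx d *m Q).
  by rewrite ME -!mulmxA mxtrace_mulC /Q !mulmxA.
have Qii i : 0 <= Q i i.
  have -> : Q i i = (row i P *m B *m (row i P) ^t*) 0 0.
    by rewrite -!row_mul /Q !mxE; apply: eq_bigr => j _; rewrite !mxE.
  exact: Bpsd.
rewrite QE -trQ mulr_sumr; apply: ler_sum => i _.
rewrite mul_diag_mx [X in _ <= X]mxE; apply: ler_wpM2r => //.
apply: Meig; first by rewrite eigenvalue_spectral_diag ?hermitian_normalmx.
exact: mxOverP (hermitian_spectral_diag_real Mherm) 0 i.
Qed.

End HermitianSpectral.

Section RealSymmetric.
Local Open Scope sesquilinear_scope.
Variable R : realType.
Local Notation toC := (real_complex R).
Local Notation mxC := (map_mx toC).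

Lemma map_mx_real_conjT p q (M : 'M[R]_(p, q)) : (mxC M) ^t* = mxC M^T.
Proof. by apply/matrixP => i j; rewrite !mxE conj_Creal // complex_real. Qed.

Lemma hermitian_map_mx_sym n (M : 'M[R]_n) : symmx M -> mxC M \is hermsymmx.
Proof.
by move=> Msym; apply/is_hermitianmxP; rewrite expr0 scale1r map_mx_real_conjT Msym.
Qed.

Lemma eigenvalue_map_mx_real n (M : 'M[R]_n) r :
  eigenvalue (mxC M) (toC r) = eigenvalue M r.
Proof. by rewrite !eigenvalue_root_char -map_char_poly fmorph_root. Qed.

Lemma ler_mxtrace_mul_sym n (M : 'M[R]_n) (c : R) (B : 'M[R[i]]_n) :
  symmx M -> (forall r, eigenvalue M r -> c <= r) ->
  (forall u : 'rV_n, 0 <= (u *m B *m u ^t*) 0 0) ->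
  toC c * \tr B <= \tr (mxC M *m B).
Proof.
move=> Msym Meig Bpsd; apply: ler_mxtrace_mul_hermitian => //.
  exact: hermitian_map_mx_sym.
move=> a aeig areal; rewrite -[a]RRe_real // lecR Meig //.
by rewrite -eigenvalue_map_mx_real RRe_real.
Qed.

Lemma ler_qformC_sym n (M : 'M[R]_n) (c : R) (u : 'rV[R[i]]_n) :
  symmx M -> (forall r, eigenvalue M r -> c <= r) ->
  toC c * (u *m u ^t*) 0 0 <= (u *m mxC M *m u ^t*) 0 0.
Proof.
move=> Msym Meig; have := ler_mxtrace_mul_sym (B := u ^t* *m u) Msym Meig.
rewrite mxtrace_mulC trace_mx11 mulmxA mxtrace_mulC trace_mx11 !mulmxA; apply.
move=> w; have -> : w *m (u ^t* *m u) *m w ^t* = (w *m u ^t*) *m (w *m u ^t*) ^t*.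
  by rewrite !mulmxA trmx_mul map_mxM trmxCK mulmxA.
by rewrite mxE big_ord1 !mxE mul_conjC_ge0.
Qed.

Lemma ler_qform_sym n (M : 'M[R]_n) (c : R) (v : 'cV[R]_n) :
  symmx M -> (forall r, eigenvalue M r -> c <= r) ->
  c * (v^T *m v) 0 0 <= (v^T *m M *m v) 0 0.
Proof.
move=> Msym Meig; have := ler_qformC_sym (mxC v^T) Msym Meig.
by rewrite map_mx_real_conjT trmxK -!map_mxM !mxE -rmorphM lecR.
Qed.

Lemma psd_eigenvalue_ge0 n (M : 'M[R]_n) r : psd M -> eigenvalue M r -> 0 <= r.
Proof.
move=> [_ Mpsd] /eigenvalueP [v vM vN0].
have := Mpsd v^T; rewrite trmxK vM -scalemxAl mxE.
suff : 0 < (v *m v^T) 0 0 by move=> vv_gt0; rewrite pmulr_lge0.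
have vsq j : 0 <= v 0 j ^+ 2 by exact: sqr_ge0.
have -> : (v *m v^T) 0 0 = \sum_j v 0 j ^+ 2.
  by rewrite mxE; apply: eq_bigr => j _; rewrite mxE expr2.
rewrite lt_def sumr_ge0 // andbT; apply: contra vN0 => /eqP /psumr_eq0P v0.
by apply/eqP/rowP => j; apply/eqP; rewrite mxE -sqrf_eq0 v0.
Qed.

Lemma ler_mxtrace_mul_psd n (M S : 'M[R]_n) (c : R) :
  symmx M -> (forall r, eigenvalue M r -> c <= r) -> psd S ->
  c * \tr S <= \tr (S *m M).
Proof.
(* M - c I is a positive semidefinite form on C^n, and S has nonnegative eigenvalues. *)
move=> Msym Meig Spsd.
pose B := mxC M - toC c *: 1%:M.
have Bpsd (u : 'rV_n) : 0 <= (u *m B *m u ^t*) 0 0.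
  have := ler_qformC_sym u Msym Meig; rewrite -subr_ge0.
  by rewrite mulmxBr mulmxBl -scalemxAr mulmx1 -scalemxAl !mxE.
have := ler_mxtrace_mul_sym Spsd.1 (fun r => psd_eigenvalue_ge0 Spsd) Bpsd.
rewrite rmorph0 mul0r mulmxBr -scalemxAr mulmx1 linearB linearZ /=.
by rewrite -map_mxM !trace_map_mx -rmorphM -rmorphB ler0c subr_ge0 mulrC.
Qed.

End RealSymmetric.

Section FrobeniusInner.
Variable R : realType.
Variables p q : nat.
Implicit Types M N : 'M[R]_(p, q).

Lemma mxinnerE M N : mxinner M N = \sum_i \sum_j M i j * N i j.
Proof.
rewrite /mxinner /mxtrace exchange_big; apply: eq_bigr => i _.
by rewrite mxE; apply: eq_bigr => j _; rewrite mxE.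
Qed.

Lemma mxinnerC M N : mxinner M N = mxinner N M.
Proof. by rewrite /mxinner -mxtrace_tr trmx_mul trmxK. Qed.

Lemma mxinnerDr M N1 N2 : mxinner M (N1 + N2) = mxinner M N1 + mxinner M N2.
Proof. by rewrite /mxinner mulmxDr mxtraceD. Qed.

Lemma mxinnerZr M N a : mxinner M (a *: N) = a * mxinner M N.
Proof. by rewrite /mxinner -scalemxAr mxtraceZ. Qed.

Lemma mxinnerNr M N : mxinner M (- N) = - mxinner M N.
Proof. by rewrite -scaleN1r mxinnerZr mulN1r. Qed.

Lemma mxinnerBr M N1 N2 : mxinner M (N1 - N2) = mxinner M N1 - mxinner M N2.
Proof. by rewrite mxinnerDr mxinnerNr. Qed.

Lemma mxinner0r M : mxinner M 0 = 0.
Proof. by rewrite /mxinner mulmx0 linear0. Qed.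

Lemma mxinnerDl M1 M2 N : mxinner (M1 + M2) N = mxinner M1 N + mxinner M2 N.
Proof. by rewrite mxinnerC mxinnerDr !(mxinnerC N). Qed.

Lemma mxinnerZl M N a : mxinner (a *: M) N = a * mxinner M N.
Proof. by rewrite mxinnerC mxinnerZr mxinnerC. Qed.

Lemma mxinnerBl M1 M2 N : mxinner (M1 - M2) N = mxinner M1 N - mxinner M2 N.
Proof. by rewrite mxinnerC mxinnerBr !(mxinnerC N). Qed.

Lemma mxinner_suml I (r : seq I) (P : pred I) (F : I -> 'M[R]_(p, q)) N :
  mxinner (\sum_(i <- r | P i) F i) N = \sum_(i <- r | P i) mxinner (F i) N.
Proof. by rewrite /mxinner linear_sum mulmx_suml raddf_sum. Qed.

Lemma mxinner_ge0 M : 0 <= mxinner M M.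
Proof. by rewrite mxinnerE; do 2!apply: sumr_ge0 => ? _; rewrite -expr2 sqr_ge0. Qed.

Lemma sqr_entry_le_mxinner M i j : M i j ^+ 2 <= mxinner M M.
Proof.
have sq_ge0 (k : 'I_p) (l : 'I_q) : 0 <= M k l * M k l by rewrite -expr2 sqr_ge0.
rewrite mxinnerE (bigD1 i) //= (bigD1 j) //= -expr2 -addrA lerDl.
by apply: addr_ge0; do ?apply: sumr_ge0 => ? _.
Qed.

Lemma mxinner_self_eq0 M : (mxinner M M == 0) = (M == 0).
Proof.
apply/eqP/eqP => [MM0|->]; last by rewrite mxinner0r.
apply/matrixP => i j; rewrite mxE; apply/eqP; rewrite -sqrf_eq0 eq_le sqr_ge0 andbT.
by rewrite -MM0 sqr_entry_le_mxinner.
Qed.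

Lemma sqr_frob M : frob M ^+ 2 = mxinner M M.
Proof.
rewrite /frob sqr_sqrtr; last by do 2!apply: sumr_ge0 => ? _; exact: sqr_ge0.
by rewrite mxinnerE; apply: eq_bigr => i _; apply: eq_bigr => j _; rewrite expr2.
Qed.

Lemma mxinner_sqrD M N :
  mxinner (M + N) (M + N) = mxinner M M + 2 * mxinner M N + mxinner N N.
Proof. by rewrite mxinnerDl !mxinnerDr (mxinnerC N M); ring. Qed.

(* Cauchy-Schwarz, read off from [0 <= <s M - e N, s M - e N>] and the same with [- N]. *)
Lemma normr_mxinner_le M N (e s : R) : 0 < e -> 0 < s ->
  mxinner M M <= e ^+ 2 -> mxinner N N <= s ^+ 2 -> `|mxinner M N| <= e * s.
Proof.
move=> e_gt0 s_gt0 MM NN.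
suff CS N' : mxinner N' N' <= s ^+ 2 -> mxinner M N' <= e * s.
  by rewrite ler_norml CS // lerNl -mxinnerNr CS // mxinnerNr mxinnerC mxinnerNr opprK.
move=> NN'; have := mxinner_ge0 (s *: M + (- e) *: N').
rewrite mxinner_sqrD !mxinnerZl !mxinnerZr => h.
have h1 : s ^+ 2 * mxinner M M <= s ^+ 2 * e ^+ 2 by rewrite ler_wpM2l ?sqr_ge0.
have h2 : e ^+ 2 * mxinner N' N' <= e ^+ 2 * s ^+ 2 by rewrite ler_wpM2l ?sqr_ge0.
rewrite -(ler_pM2l (mulr_gt0 e_gt0 s_gt0)); lra.
Qed.

End FrobeniusInner.

Lemma mxinner_mulmxr (R : realType) a b c (M : 'M[R]_(a, b)) (N : 'M[R]_(a, c))
    (P : 'M[R]_(b, c)) :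
  mxinner M (N *m P^T) = mxinner (M *m P) N.
Proof. by rewrite /mxinner trmx_mul mulmxA mxtrace_mulC !mulmxA. Qed.

Fact Aop_is_linear (R : realType) n m (A : 'I_m -> 'M[R]_n) : linear (Aop A).
Proof. by move=> a M N; apply/colP => i; rewrite !mxE mxinnerDr mxinnerZr. Qed.

HB.instance Definition _ (R : realType) n m (A : 'I_m -> 'M[R]_n) :=
  GRing.isLinear.Build R 'M[R]_n 'cV[R]_m *:%R (Aop A) (Aop_is_linear A).

Fact Aadj_is_linear (R : realType) n m (A : 'I_m -> 'M[R]_n) : linear (Aadj A).
Proof.
move=> a w v; rewrite /Aadj scaler_sumr -big_split; apply: eq_bigr => i _ /=.
by rewrite !mxE scalerDl scalerA.
Qed.

HB.instance Definition _ (R : realType) n m (A : 'I_m -> 'M[R]_n) :=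
  GRing.isLinear.Build R 'cV[R]_m 'M[R]_n *:%R (Aadj A) (Aadj_is_linear A).

Section SquareInner.
Variable R : realType.
Variable n : nat.
Implicit Types M S : 'M[R]_n.

Lemma mxinner_symmx S M : symmx S -> mxinner S M = \tr (S *m M).
Proof. by rewrite /mxinner => ->. Qed.

Lemma qform_mxinner (v : 'cV[R]_n) M : (v^T *m M *m v) 0 0 = mxinner (v *m v^T) M.
Proof.
rewrite /mxinner trmx_mul trmxK mxtrace_mulC mulmxA mxtrace_mulC mulmxA.
by rewrite trace_mx11.
Qed.

Lemma mxinner_Diag M (w : 'cV[R]_n) : mxinner M (Diag w) = mxinner (mdiag M) w.
Proof.
rewrite !mxinnerE; apply: eq_bigr => i _; rewrite big_ord1 (bigD1 i) //= big1.
  by rewrite !mxE eqxx mulr1n addr0.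
by move=> j ji; rewrite !mxE eq_sym (negbTE ji) mulr0n mulr0.
Qed.

Lemma Diag_sym (w : 'cV[R]_n) : symmx (Diag w).
Proof. exact: tr_diag_mx. Qed.

End SquareInner.

Section Adjoint.
Variable R : realType.
Variables n m : nat.
Variable A : 'I_m -> 'M[R]_n.

Lemma Aop_Aadj w : Aop A (Aadj A w) = AAt A *m w.
Proof.
apply/colP => i; rewrite !mxE /Aadj mxinnerC mxinner_suml.
by apply: eq_bigr => l _; rewrite mxinnerZl !mxE mxinnerC mulrC.
Qed.

Lemma mxinner_Aadj w M : mxinner (Aadj A w) M = mxinner w (Aop A M).
Proof.
rewrite /Aadj mxinner_suml mxinnerE; apply: eq_bigr => l _.
by rewrite big_ord1 mxinnerZl mxE.
Qed.

Lemma Aadj_sym w : (forall i, symmx (A i)) -> symmx (Aadj A w).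
Proof.
move=> Asym; rewrite /symmx /Aadj raddf_sum; apply: eq_bigr => i _ /=.
by rewrite linearZ /= Asym.
Qed.

End Adjoint.

Lemma cvgn_increasing (phi : nat -> nat) :
  (forall k, (phi k < phi k.+1)%N) -> phi @ \oo --> \oo.
Proof.
move=> phi_incr; have le_phi k : (k <= phi k)%N.
  by elim: k => // k IHk; exact: leq_ltn_trans IHk (phi_incr k).
by apply/cvgnyPge => N; exists N => // k /= /leq_trans; apply.
Qed.

Lemma cvg_sum (K : numFieldType) (V : normedModType K) (I : Type) (r : seq I)
    (P : pred I) (f : I -> nat -> V) (a : I -> V) :
  (forall i, P i -> f i @ \oo --> a i) ->
  (fun k => \sum_(i <- r | P i) f i k) @ \oo --> \sum_(i <- r | P i) a i.
Proof. by move=> fa; apply: cvg_big => //; exact: add_continuous. Qed.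

Lemma cvg_pair_split (T U : topologicalType) (f : nat -> T) (g : nat -> U)
    (a : T) (b : U) :
  (fun k => (f k, g k)) @ \oo --> (a, b) -> f @ \oo --> a /\ g @ \oo --> b.
Proof.
by move=> fg; split; [exact: cvg_comp _ _ fg cvg_fst | exact: cvg_comp _ _ fg cvg_snd].
Qed.

Section MatrixLimits.
Variable R : realType.

Lemma cvg_mx_entry p q (f : nat -> 'M[R]_(p, q)) (M : 'M[R]_(p, q)) i j :
  f @ \oo --> M -> (fun k => f k i j) @ \oo --> M i j.
Proof. by move=> fM; exact: cvg_comp _ _ fM (@coord_continuous _ _ _ i j M). Qed.

#[global] Arguments cvg_mx_entry {p q f M} i j.

Lemma cvg_mxinner p q (f g : nat -> 'M[R]_(p, q)) (M N : 'M[R]_(p, q)) :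
  f @ \oo --> M -> g @ \oo --> N ->
  (fun k => mxinner (f k) (g k)) @ \oo --> mxinner M N.
Proof.
move=> fM gN; under eq_fun do rewrite mxinnerE; rewrite mxinnerE.
by do 2!apply: cvg_sum => ? _; apply: cvgM; exact: cvg_mx_entry.
Qed.

Lemma cvg_Aadj n m (A : 'I_m -> 'M[R]_n) (w : nat -> 'cV[R]_m) v :
  w @ \oo --> v -> (fun k => Aadj A (w k)) @ \oo --> Aadj A v.
Proof.
move=> wv; apply: cvg_sum => l _; apply: cvgZ (cvg_cst _).
exact: cvg_mx_entry.
Qed.

Lemma symmx_cvg n (f : nat -> 'M[R]_n) (M : 'M[R]_n) :
  (forall k, symmx (f k)) -> f @ \oo --> M -> symmx M.
Proof.
move=> fsym fM; apply/matrixP => i j; rewrite mxE.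
have fji : (fun k => f k j i) @ \oo --> M i j.
  by under eq_fun do rewrite -(fsym _) mxE; exact: cvg_mx_entry.
exact: cvg_unique _ (cvg_mx_entry j i fM) fji.
Qed.

Lemma psd_cvg n (f : nat -> 'M[R]_n) (t : nat -> R) (M : 'M[R]_n) :
  t @ \oo --> 0 -> (forall k, symmx (f k)) ->
  (forall k (v : 'cV[R]_n), - t k * (v^T *m v) 0 0 <= (v^T *m f k *m v) 0 0) ->
  f @ \oo --> M -> psd M.
Proof.
move=> t0 fsym fqf fM; split; first exact: symmx_cvg fsym fM.
move=> v; rewrite qform_mxinner.
have tv0 : (fun k => - t k * (v^T *m v) 0 0) @ \oo --> 0.
  rewrite -(mul0r ((v^T *m v) 0 0)); apply: cvgM; last exact: cvg_cst.
  by rewrite -oppr0; exact: cvgN.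
apply: ler_cvg_to tv0 (cvg_mxinner (cvg_cst _) fM) _.
by apply: nearW => k; rewrite -qform_mxinner.
Qed.

End MatrixLimits.

Lemma cvg0_quasi_fejer (R : realType) (a q d : R ^nat) (c : R) :
  0 < c -> (forall k, 0 <= a k) -> (forall k, 0 <= q k) -> (forall k, 0 <= d k) ->
  cvgn (series d) -> (forall k, c * q k <= a k - a k.+1 + d k) ->
  q @ \oo --> 0.
Proof.
move=> c_gt0 a_ge0 q_ge0 d_ge0 d_sum step.
have tele N : c * series q N <= a 0%N - a N + series d N.
  elim: N => [|N IHN]; first by rewrite /series /= !big_geq // mulr0 subrr addr0.
  by rewrite !seriesSr mulrDr; have := step N; lra.
have d_le N : series d N <= limn (series d).
  exact: nondecreasing_cvgn_le
    (nondecreasing_series (P := predT) (m := 0%N) (fun k _ _ => d_ge0 k)) d_sum N.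
apply: cvg_series_cvg_0; apply: nondecreasing_is_cvgn.
  exact: (nondecreasing_series (P := predT) (m := 0%N) (fun k _ _ => q_ge0 k)).
exists ((a 0%N + limn (series d)) / c) => _ [N _ <-].
rewrite ler_pdivlMr // mulrC.
by have := tele N; have := a_ge0 N; have := d_le N; lra.
Qed.

Lemma kkt_limit (R : realType) n m (A : 'I_m -> 'M[R]_n) (b : 'cV[R]_m)
    (C : 'M[R]_n) (Sk : nat -> 'M[R]_n) (yk : nat -> 'cV[R]_m)
    (Xk : nat -> 'M[R]_n) (zk : nat -> 'cV[R]_n) (e t : nat -> R)
    (Shat : 'M[R]_n) (yhat : 'cV[R]_m) (Xhat : 'M[R]_n) (zhat : 'cV[R]_n) :
  e @ \oo --> 0 -> t @ \oo --> 0 ->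
  (forall k, psd (Sk k)) -> (forall k, mdiag (Sk k) = const_mx 1) ->
  (forall k, symmx (Xk k)) ->
  (forall k (v : 'cV[R]_n), - t k * (v^T *m v) 0 0 <= (v^T *m Xk k *m v) 0 0) ->
  (forall k, `|mxinner (Xk k) (Sk k)| <= e k) ->
  (forall k, Aop A (Xk k + Diag (zk k)) = b) ->
  (fun k => mxinner (Sk k + C - Aadj A (yk k)) (Sk k + C - Aadj A (yk k)))
    @ \oo --> 0 ->
  Sk @ \oo --> Shat -> yk @ \oo --> yhat -> Xk @ \oo --> Xhat ->
  zk @ \oo --> zhat ->
  kkt A b C Shat yhat Xhat zhat.
Proof.
move=> e0 t0 Spsd Sdiag Xsym Xeig compl feas res0 SS yy XX zz.
split; [|split; [|split; [|split; [|split]]]].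
- have rr : (fun k => Sk k + C - Aadj A (yk k)) @ \oo --> Shat + C - Aadj A yhat.
    by apply: cvgB; [exact: cvgD SS (cvg_cst C) | exact: cvg_Aadj].
  have /eqP : mxinner (Shat + C - Aadj A yhat) (Shat + C - Aadj A yhat) = 0.
    exact: cvg_unique _ (cvg_mxinner rr rr) res0.
  by rewrite mxinner_self_eq0 subr_eq0 => /eqP <-; rewrite addrK.
- apply: psd_cvg (cvg_cst 0) _ _ SS => [k|k v]; first exact: (Spsd k).1.
  by rewrite oppr0 mul0r; exact: (Spsd k).2.
- apply/colP => i; rewrite !mxE.
  have Sii k : Sk k i i = 1.
    by move/colP/(_ i): (Sdiag k); rewrite !mxE.
  have S1 : (fun k => Sk k i i) @ \oo --> (1 : R).
    by under eq_fun do rewrite Sii; exact: cvg_cst.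
  exact: cvg_unique _ (cvg_mx_entry i i SS) S1.
- exact: psd_cvg t0 Xsym Xeig XX.
- apply/eqP; rewrite -normr_le0.
  have XS : (fun k => `|mxinner (Xk k) (Sk k)|) @ \oo --> `|mxinner Xhat Shat|.
    by apply: cvg_norm; exact: cvg_mxinner.
  by apply: ler_cvg_to XS e0 _; apply: nearW.
- apply/colP => i; rewrite mxE mxinnerDr mxinner_Diag.
  have feas_i k : mxinner (A i) (Xk k) + mxinner (mdiag (A i)) (zk k) = b i 0.
    by rewrite -mxinner_Diag -mxinnerDr -(feas k) mxE.
  have lhs : (fun k => mxinner (A i) (Xk k) + mxinner (mdiag (A i)) (zk k)) @ \oo
      --> mxinner (A i) Xhat + mxinner (mdiag (A i)) zhat.
    by apply: cvgD; apply: cvg_mxinner (cvg_cst _) _.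
  have rhs : (fun k => mxinner (A i) (Xk k) + mxinner (mdiag (A i)) (zk k)) @ \oo
      --> b i 0 by under eq_fun do rewrite feas_i; exact: cvg_cst.
  exact: cvg_unique _ lhs rhs.
Qed.

Lemma mxinner_psd_sub_le (R : realType) n (S S0 X X0 : 'M[R]_n) (t : R) :
  psd S -> psd S0 -> mdiag S0 = const_mx 1 -> psd X0 -> mxinner X0 S0 = 0 ->
  symmx X -> (forall a, eigenvalue X a -> - t <= a) ->
  mxinner (S - S0) (X - X0) <= mxinner S X + t * n%:R.
Proof.
move=> Spsd S0psd S0diag X0psd X0S0 Xsym Xeig.
have trS0 : \tr S0 = n%:R.
  rewrite /mxtrace (eq_bigr (fun=> 1)) ?sumr_const ?card_ord // => i _.
  by move/colP/(_ i): S0diag; rewrite !mxE.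
have SX0 : 0 <= mxinner S X0.
  have := ler_mxtrace_mul_psd X0psd.1 (fun a => psd_eigenvalue_ge0 X0psd) Spsd.
  by rewrite mul0r (mxinner_symmx _ Spsd.1).
have S0X : - t * n%:R <= mxinner S0 X.
  by rewrite (mxinner_symmx _ S0psd.1) -trS0; exact: ler_mxtrace_mul_psd.
rewrite mxinnerBl !mxinnerBr (mxinnerC S0 X0) X0S0; lra.
Qed.

Section Iterates.
Variable R : realType.
Variables (n m : nat) (A : 'I_m -> 'M[R]_n) (b : 'cV[R]_m) (C : 'M[R]_n).
Variables (S0 : 'M[R]_n) (y0 : 'cV[R]_m) (X0 : 'M[R]_n) (z0 : 'cV[R]_n).
Variables (sigma_min sigma_max : R) (eps tau sigma : nat -> R) (p : nat -> nat).
Variable Y : forall k, 'M[R]_(n, p k).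
Variables (S : nat -> 'M[R]_n) (y : nat -> 'cV[R]_m).
Variables (Xt X : nat -> 'M[R]_n) (z : nat -> 'cV[R]_n).

Local Notation D := (Aadj A (invmx (AAt A) *m b)).
Local Notation r k := (S k.+1 + C - Aadj A (y k.+1)).
Local Notation V k := (Xt k - (X0 + Diag z0 - D)).
Local Notation delta k := (eps k * Num.sqrt n%:R + tau k * n%:R).

Hypothesis n_gt0 : (0 < n)%N.
Hypothesis Asym : forall i, symmx (A i).
Hypothesis AAt_unit : AAt A \in unitmx.
Hypothesis Csym : symmx C.
Hypothesis kkt0 : kkt A b C S0 y0 X0 z0.
Hypothesis smin_gt0 : 0 < sigma_min.
Hypothesis eps_gt0 : forall k, 0 < eps k.
Hypothesis tau_gt0 : forall k, 0 < tau k.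
Hypothesis eps_sum : cvg (series eps @ \oo).
Hypothesis tau_sum : cvg (series tau @ \oo).
Hypothesis Xt0 : Xt 0%N = 0.
Hypothesis sigma_bnd : forall k, sigma_min <= sigma k <= sigma_max.
Hypothesis Y_rows : forall k (i : 'I_n), \sum_(j < p k.+1) Y k.+1 i j ^+ 2 = 1.
Hypothesis S_def : forall k, S k.+1 = Y k.+1 *m (Y k.+1)^T.
Hypothesis y_def : forall k, y k.+1 = invmx (AAt A) *m Aop A (S k.+1 + C).
Hypothesis Xt_def :
  forall k, Xt k.+1 = Xt k - sigma k *: (Aadj A (y k.+1) - S k.+1 - C).
Hypothesis X_def : forall k, X k.+1 = Xt k.+1 + D - Diag (z k.+1).
Hypothesis XY_small : forall k, frob (X k.+1 *m Y k.+1) <= eps k.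
Hypothesis X_eig : forall k (a : R), eigenvalue (X k.+1) a -> - tau k <= a.

Lemma Aop_D : Aop A D = b.
Proof. by rewrite Aop_Aadj mulKVmx. Qed.

Lemma Aop_Xt k : Aop A (Xt k) = 0.
Proof.
elim: k => [|k IHk]; first by rewrite Xt0 linear0.
rewrite Xt_def linearB linearZ /= IHk -addrA -opprD linearB /= Aop_Aadj y_def.
by rewrite mulKVmx // subrr scaler0 subr0.
Qed.

Lemma feasible_iterate k : Aop A (X k.+1 + Diag (z k.+1)) = b.
Proof. by rewrite X_def subrK linearD /= Aop_Xt Aop_D add0r. Qed.

Lemma symmx_S k : symmx (S k.+1).
Proof. by rewrite /symmx S_def trmx_mul trmxK. Qed.

Lemma psd_S k : psd (S k.+1).
Proof.
split=> [|v]; first exact: symmx_S.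
have -> : v^T *m S k.+1 *m v = (v^T *m Y k.+1) *m (v^T *m Y k.+1)^T.
  by rewrite S_def trmx_mul trmxK !mulmxA.
by rewrite -trace_mx11 mxtrace_mulC; exact: mxinner_ge0.
Qed.

Lemma mdiag_S k : mdiag (S k.+1) = const_mx 1.
Proof.
apply/colP => i; rewrite !mxE S_def mxE -(Y_rows k i).
by apply: eq_bigr => j _; rewrite !mxE expr2.
Qed.

Lemma symmx_Xt k : symmx (Xt k).
Proof.
elim: k => [|k IHk]; first by rewrite /symmx Xt0 trmx0.
rewrite /symmx Xt_def linearB /= linearZ /= !linearB /= IHk.
by rewrite Aadj_sym // symmx_S Csym.
Qed.

Lemma symmx_X k : symmx (X k.+1).
Proof.
by rewrite /symmx X_def linearB /= linearD /= symmx_Xt Aadj_sym // Diag_sym.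
Qed.

Lemma complementarity_bound k :
  `|mxinner (X k.+1) (S k.+1)| <= eps k * Num.sqrt n%:R.
Proof.
have YY : mxinner (Y k.+1) (Y k.+1) = Num.sqrt n%:R ^+ 2.
  rewrite sqr_sqrtr ?ler0n // mxinnerE (eq_bigr (fun=> 1)) ?sumr_const ?card_ord //.
  by move=> i _; rewrite -(Y_rows k i); apply: eq_bigr => j _; rewrite expr2.
rewrite S_def mxinner_mulmxr.
apply: normr_mxinner_le; [exact: eps_gt0 | by rewrite sqrtr_gt0 ltr0n | | by rewrite YY].
by rewrite -sqr_frob ler_sqr ?nnegrE ?XY_small ?sqrtr_ge0 ?ltW.
Qed.

Lemma delta_ge0 k : 0 <= delta k.
Proof.
by rewrite addr_ge0 ?mulr_ge0 ?sqrtr_ge0 ?ler0n ?(ltW (eps_gt0 k)) ?(ltW (tau_gt0 k)).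
Qed.

Lemma sigma_ge0 k : 0 <= sigma k.
Proof. by case/andP: (sigma_bnd k) => /(le_trans (ltW smin_gt0)). Qed.

Lemma mxinner_residual_le k : mxinner (r k) (V k.+1) <= delta k.
Proof.
have [S0_def [S0psd [S0diag [X0psd [X0S0 AX0]]]]] := kkt0.
have rE : r k = (S k.+1 - S0) - Aadj A (y k.+1 - y0).
  rewrite S0_def [Aadj A (_ - _)]linearB /=.
  by apply/matrixP => i j; rewrite !mxE; ring.
have VE : V k.+1 = (X k.+1 - X0) + (Diag (z k.+1) - Diag z0).
  by rewrite X_def; apply/matrixP => i j; rewrite !mxE; ring.
have AV : Aop A (V k.+1) = 0.
  by rewrite linearB /= Aop_Xt linearB /= AX0 Aop_D subrr subr0.
have dS : mdiag (S k.+1 - S0) = 0.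
  apply/colP => i; move/colP/(_ i): (mdiag_S k).
  by rewrite -S0diag !mxE => ->; rewrite subrr.
rewrite {1}rE mxinnerBl mxinner_Aadj AV mxinner0r subr0 VE mxinnerDr.
rewrite [mxinner _ (Diag _ - _)]mxinnerBr !mxinner_Diag dS !(mxinnerC 0) !mxinner0r.
have := mxinner_psd_sub_le (psd_S k) S0psd S0diag X0psd X0S0 (symmx_X k)
  (X_eig (k := k)).
by have := complementarity_bound k; rewrite ler_norml mxinnerC => /andP [_ SX]; lra.
Qed.

Lemma fejer_step k :
  sigma_min ^+ 2 * mxinner (r k) (r k) <=
  mxinner (V k) (V k) - mxinner (V k.+1) (V k.+1) + 2 * sigma_max * delta k.
Proof.
have Vk : V k = V k.+1 + (- sigma k) *: r k.
  by rewrite Xt_def; apply/matrixP => i j; rewrite !mxE; ring.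
have /andP [smin_le smax_ge] := sigma_bnd k.
have sq : sigma_min ^+ 2 * mxinner (r k) (r k) <=
    sigma k ^+ 2 * mxinner (r k) (r k).
  by rewrite ler_wpM2r ?mxinner_ge0 // ler_sqr ?nnegrE ?sigma_ge0 ?(ltW smin_gt0).
have lin : sigma k * mxinner (r k) (V k.+1) <= sigma_max * delta k.
  apply: le_trans (ler_wpM2l (sigma_ge0 k) (mxinner_residual_le k)) _.
  by rewrite ler_wpM2r ?delta_ge0.
rewrite Vk (mxinner_sqrD (V k.+1)) mxinnerZr !mxinnerZl mxinnerZr.
by rewrite (mxinnerC (V k.+1)); lra.
Qed.

Lemma residual_cvg0 : (fun k => mxinner (r k) (r k)) @ \oo --> 0.
Proof.
pose d k := 2 * sigma_max * delta k.
apply: (@cvg0_quasi_fejer _ (fun k => mxinner (V k) (V k)) _ d (sigma_min ^+ 2)).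
- exact: exprn_gt0.
- by move=> k; exact: mxinner_ge0.
- by move=> k; exact: mxinner_ge0.
- move=> k; rewrite mulr_ge0 ?delta_ge0 // mulr_ge0 //.
  by case/andP: (sigma_bnd k) => _; apply: le_trans (sigma_ge0 k).
- have -> : d = (2 * sigma_max * Num.sqrt n%:R) *: eps
              + (2 * sigma_max * n%:R) *: tau.
    by apply/funext => k; rewrite /d -[RHS]/(_ * eps k + _ * tau k); ring.
  by apply: is_cvg_seriesD; exact: is_cvg_seriesZ.
- exact: fejer_step.
Qed.

Lemma limit_point_kkt (phi : nat -> nat) (Shat : 'M[R]_n) (yhat : 'cV[R]_m)
    (Xhat : 'M[R]_n) (zhat : 'cV[R]_n) :
  (forall k, (phi k < phi k.+1)%N) ->
  (fun k => (S (phi k).+1, y (phi k).+1, X (phi k).+1, z (phi k).+1))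
    @ \oo --> (Shat, yhat, Xhat, zhat) ->
  kkt A b C Shat yhat Xhat zhat.
Proof.
move=> phi_incr /cvg_pair_split [/cvg_pair_split [/cvg_pair_split [SS yy] XX] zz].
have phi_oo := cvgn_increasing phi_incr.
have sub (u : R ^nat) : u @ \oo --> 0 -> (fun k => u (phi k)) @ \oo --> 0.
  by move=> u0; exact: cvg_comp _ _ phi_oo u0.
apply: (kkt_limit (e := fun k => eps (phi k) * Num.sqrt n%:R)
                  (t := fun k => tau (phi k))) SS yy XX zz.
- rewrite -(mul0r (Num.sqrt n%:R)); apply: cvgM; last exact: cvg_cst.
  exact/sub/cvg_series_cvg_0.
- exact/sub/cvg_series_cvg_0.
- by move=> k; exact: psd_S.
- by move=> k; exact: mdiag_S.
- by move=> k; exact: symmx_X.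
- by move=> k v; apply: ler_qform_sym; [exact: symmx_X | exact: X_eig].
- by move=> k; exact: complementarity_bound.
- by move=> k; exact: feasible_iterate.
- exact: cvg_comp _ _ phi_oo residual_cvg0.
Qed.

End Iterates.

Theorem theorem5p1 (R : realType) (n m : nat) (A : 'I_m -> 'M[R]_n)
  (b : 'cV[R]_m) (C : 'M[R]_n)
  (sigma_min sigma_max : R) (eps tau : nat -> R)
  (sigma : nat -> R) (p : nat -> nat) (Y : forall k, 'M[R]_(n, p k))
  (S : nat -> 'M[R]_n) (y : nat -> 'cV[R]_m) (Xt : nat -> 'M[R]_n)
  (z : nat -> 'cV[R]_n) (X : nat -> 'M[R]_n)
  (Shat : 'M[R]_n) (yhat : 'cV[R]_m) (Xhat : 'M[R]_n) (zhat : 'cV[R]_n) :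
  (0 < n)%N -> (0 < m)%N ->
  (forall i, symmx (A i)) ->
  AAt A \in unitmx ->
  symmx C ->
  (exists S0 y0 X0 z0, kkt A b C S0 y0 X0 z0) ->
  0 < sigma_min -> sigma_min < sigma_max ->
  (forall k, 0 < eps k) -> (forall k, 0 < tau k) ->
  cvg (series eps @ \oo) -> cvg (series tau @ \oo) ->
  let D := Aadj A (invmx (AAt A) *m b) in
  y 0%N = 0 -> Xt 0%N = 0 ->
  (forall k, sigma_min <= sigma k <= sigma_max) ->
  (forall k, (0 < p k.+1)%N) ->
  (forall k (i : 'I_n), \sum_(j < p k.+1) Y k.+1 i j ^+ 2 = 1) ->
  (forall k, S k.+1 = Y k.+1 *m (Y k.+1)^T) ->
  (forall k, y k.+1 = invmx (AAt A) *m Aop A (S k.+1 + C)) ->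
  (forall k, Xt k.+1 = Xt k - sigma k *: (Aadj A (y k.+1) - S k.+1 - C)) ->
  (forall k, z k.+1 = mdiag ((Xt k.+1 + D) *m S k.+1)) ->
  (forall k, X k.+1 = Xt k.+1 + D - Diag (z k.+1)) ->
  (forall k, frob (X k.+1 *m Y k.+1) <= eps k) ->
  (forall k (a : R), eigenvalue (X k.+1) a -> - tau k <= a) ->
  (* (Shat, yhat, Xhat, zhat) is a limit point of {(S^k,y^k,X^k,z^k)}_{k>=1} *)
  (exists phi : nat -> nat, (forall k, (phi k < phi k.+1)%N) /\
     (fun k => (S (phi k).+1, y (phi k).+1, X (phi k).+1, z (phi k).+1))
       @ \oo --> (Shat, yhat, Xhat, zhat)) ->
  kkt A b C Shat yhat Xhat zhat.
Proof.
move=> n_gt0 _ Asym AAt_unit Csym [S0 [y0 [X0 [z0 kkt0]]]] smin_gt0 _ eps_gt0 tau_gt0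
  eps_sum tau_sum D _ Xt0 sigma_bnd _ Y_rows S_def y_def Xt_def _ X_def XY_small X_eig
  [phi [phi_incr lim_phi]].
exact: (limit_point_kkt n_gt0 Asym AAt_unit Csym kkt0 smin_gt0 eps_gt0 tau_gt0 eps_sum
  tau_sum Xt0 sigma_bnd Y_rows S_def y_def Xt_def X_def XY_small X_eig phi_incr lim_phi).
Qed.
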